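(* Let $n>3$ and let $A=[A_1,\ldots,A_n]$ be an $n\times n\times n$ ASHM, with $L=L(A)=1A_1+\cdots+nA_n$. Then none of the second row, the $(n-1)$-st row, the second column, and the $(n-1)$-st column of $L$ is constant.
   Context: An $n\times n$ alternating sign matrix (ASM) is an $n\times n$ matrix with entries in $\{0,1,-1\}$ such that in every row and column the nonzeros alternate in sign, beginning and ending with $+1$. An $n\times n\times n$ hypermatrix $A=[a_{ijk}]$ is written $A=[A_1,\ldots,A_n]$ with $A_k=[a_{ijk}]_{i,j}$; lines are obtained by fixing two of the three indices. $A$ is an ASHM if all entries lie in $\{0,\pm1\}$ and in every line the nonzeros alternate in sign beginning and ending with $+1$. A line of a matrix is constant if all its entries are equal. *)

From HB Require Import structures.
From mathcomp Require Import all_boot all_order all_algebra.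
Set Implicit Arguments. Unset Strict Implicit. Unset Printing Implicit Defensive.
Import Order.TTheory GRing.Theory Num.Theory.
Local Open Scope ring_scope.

(* An n x n x n hypermatrix with integer entries; A i j k = a_{(i+1)(j+1)(k+1)}
   (indices are 0-based ordinals). *)
Definition hypermatrix (n : nat) := 'I_n -> 'I_n -> 'I_n -> int.

Definition alt_sign_seq (s : seq int) : bool :=
  let t := [seq x <- s | x != 0] in
  (t == [seq (-1) ^+ i | i <- iota 0 (size t)]) && odd (size t).

Definition entries01 (n : nat) (A : hypermatrix n) : bool :=
  [forall i, forall j, forall k, (A i j k == 0) || (A i j k == 1) || (A i j k == -1)].

Definition is_ASHM (n : nat) (A : hypermatrix n) : bool :=
  [&& entries01 A,
      [forall i, forall j, alt_sign_seq [seq A i j k | k <- enum 'I_n]],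
      [forall i, forall k, alt_sign_seq [seq A i j k | j <- enum 'I_n]] &
      [forall j, forall k, alt_sign_seq [seq A i j k | i <- enum 'I_n]]].

Definition Lmat (n : nat) (A : hypermatrix n) : 'M[int]_n :=
  \matrix_(i < n, j < n) \sum_(k < n) (k.+1)%:R * A i j k.

Definition const_row (n : nat) (M : 'M[int]_n) (i : 'I_n) : Prop :=
  forall j j' : 'I_n, M i j = M i j'.

Definition const_col (n : nat) (M : 'M[int]_n) (j : 'I_n) : Prop :=
  forall i i' : 'I_n, M i j = M i' j.

(* Let r be 1 or n - 2, let o be the adjacent border index (0 or n - 1), and suppose that
   row r of L is constant: the k-lines of the plane i = r all have the same weight, where
   the weight of a line is [\sum_k (k+1) a_k].  An entry at the start of an alternating
   line is never -1, and it constrains the next entry.  Hence the k-lines j = 0 and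
   j = n - 1 of the plane i = r have no -1, so are unit vectors e_k of weight k + 1,
   and equal weights make them the same e_k0.  The k-lines j = 1 and
   j = n - 2 have no -1 outside k0; without a -1 at k0 they would be unit vectors of
   weight k0 + 1, i.e. e_k0, two consecutive 1s in the j-line through k0.  So both carry a
   -1 at k0, which forces the entries (o, 1, k0) and (o, n - 2, k0) to be nonzero.  But the
   j-line (o, _, k0) has no -1, so it is a unit vector, and 1 <> n - 2 as n > 3.  Columns
   are handled by the same argument with i and j exchanged. *)

From mathcomp Require Import all_boot all_order all_algebra zify.
Set Implicit Arguments. Unset Strict Implicit. Unset Printing Implicit Defensive.
Import Order.TTheory GRing.Theory Num.Theory.
Local Open Scope ring_scope.

Definition nonzeros (s : seq int) : seq int := [seq x <- s | x != 0].

Lemma alt_sign_seqP s : alt_sign_seq s ->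
  odd (size (nonzeros s)) /\
  forall i, (i < size (nonzeros s))%N -> nth 0 (nonzeros s) i = (-1) ^+ i.
Proof.
case/andP=> /eqP def_nz odd_nz; split=> // i lt_i.
by rewrite /nonzeros def_nz (nth_map 0%N) ?nth_iota ?size_iota.
Qed.

Lemma alt_sign_seq_rev s : alt_sign_seq s -> alt_sign_seq (rev s).
Proof.
case/alt_sign_seqP=> odd_nz nth_nz.
rewrite /alt_sign_seq /= filter_rev size_rev odd_nz andbT -/(nonzeros s).
apply/eqP/(@eq_from_nth _ 0); first by rewrite size_rev size_map size_iota.
move=> i; rewrite size_rev => lt_i.
rewrite nth_rev // (nth_map 0%N) ?size_iota // nth_iota // add0n nth_nz; last first.
  by move: lt_i; set m := size _; lia.
by rewrite -[LHS]signr_odd -[RHS]signr_odd oddB // odd_nz /= negbK.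
Qed.

Definition alt_sign_start (x y : int) : Prop :=
  [/\ x <> -1, x = 0 -> y <> -1 & x = 1 -> y <> 1].

Lemma alt_sign_seq_start s : alt_sign_seq s -> (1 < size s)%N ->
  alt_sign_start (nth 0 s 0) (nth 0 s 1).
Proof.
case: s => [|x [|y t]] // /alt_sign_seqP[odd_nz nth_nz] _ /=.
have nz0 := nth_nz 0%N (odd_gt0 odd_nz).
split=> [x_m1 | x0 y_m1 | x1 y1]; move: nz0; rewrite /nonzeros /=.
- by rewrite x_m1.
- by rewrite x0 y_m1.
have /nth_nz : (1 < size (nonzeros [:: x, y & t]))%N by rewrite /nonzeros /= x1 y1.
by rewrite /nonzeros /= x1 y1.
Qed.

Lemma alt_sign_seq_end s : alt_sign_seq s -> (1 < size s)%N ->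
  alt_sign_start (nth 0 s (size s - 1)) (nth 0 s (size s - 2)).
Proof.
move=> /alt_sign_seq_rev alt_r s_gt1.
have := alt_sign_seq_start alt_r; rewrite size_rev => /(_ s_gt1).
by rewrite !nth_rev ?subn1 ?subn2 // ltnW.
Qed.

Lemma nth_line n (f : 'I_n -> int) (k : 'I_n) : nth 0 [seq f k | k <- enum 'I_n] k = f k.
Proof. by rewrite (nth_map k) ?size_enum_ord // nth_ord_enum. Qed.

Lemma alt_line_border_start n (r : 'I_n) : (1 < n)%N -> (val r = 1 \/ val r = n - 2)%N ->
  exists o : 'I_n, forall f : 'I_n -> int,
    alt_sign_seq [seq f k | k <- enum 'I_n] -> alt_sign_start (f o) (f r).
Proof.
move=> n_gt1 r_val; have size_line f : size [seq f k | k <- enum 'I_n] = n.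
  by rewrite size_map size_enum_ord.
have [first_r | last_r] := r_val.
- exists (Ordinal (ltnW n_gt1)) => f alt_f; rewrite -!nth_line first_r.
  by apply: alt_sign_seq_start; rewrite ?size_line.
- have lt_last : (n - 1 < n)%N by lia.
  exists (Ordinal lt_last) => f alt_f; rewrite -!nth_line last_r /=.
  by have := alt_sign_seq_end alt_f; rewrite size_line; apply.
Qed.

Lemma alt_line_unit n (f : 'I_n -> int) :
  alt_sign_seq [seq f k | k <- enum 'I_n] -> (forall k, f k <> -1) ->
  exists k0, forall k, f k = (k == k0)%:R.
Proof.
move=> alt_f no_m1; have [odd_nz nth_nz] := alt_sign_seqP alt_f.
have nz_f : nonzeros [seq f k | k <- enum 'I_n] = map f [seq k <- enum 'I_n | f k != 0].
  by rewrite /nonzeros filter_map.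
have size_nz : size (nonzeros [seq f k | k <- enum 'I_n]) = 1%N.
  case def_m: (size _) odd_nz => [|[|m]] // _.
  have lt1 : (1 < size (nonzeros [seq f k | k <- enum 'I_n]))%N by rewrite def_m.
  have := mem_nth 0 lt1; rewrite nth_nz // expr1 nz_f => /mapP[k _ fk_m1].
  by have := no_m1 k; rewrite fk_m1.
move: nth_nz size_nz; rewrite nz_f size_map.
case def_nz: [seq k <- enum 'I_n | f k != 0] => [|k0 []] // /(_ 0%N isT) /= fk0 _.
exists k0 => k; case: eqVneq => [-> // | ne_k]; apply/eqP/negPn/negP => fk_nz.
have : k \in [seq k <- enum 'I_n | f k != 0] by rewrite mem_filter mem_enum andbT.
by rewrite def_nz mem_seq1 (negPf ne_k).
Qed.

Definition weight n (f : 'I_n -> int) : int := \sum_(k < n) (k.+1)%:R * f k.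

Lemma LmatE n (A : hypermatrix n) i j : Lmat A i j = weight (A i j).
Proof. by rewrite mxE. Qed.

Lemma weight_unit n (f : 'I_n -> int) k0 :
  (forall k, f k = (k == k0)%:R) -> weight f = (k0.+1)%:R.
Proof.
move=> fE; rewrite /weight (bigD1 k0) //= big1 => [|k ne_k].
  by rewrite fE eqxx mulr1 addr0.
by rewrite fE (negPf ne_k) mulr0.
Qed.

Lemma weight_unit_inj n (f g : 'I_n -> int) k0 k1 :
  (forall k, f k = (k == k0)%:R) -> (forall k, g k = (k == k1)%:R) ->
  weight f = weight g -> k0 = k1.
Proof.
move=> /weight_unit -> /weight_unit -> /eqP.
by rewrite eqr_nat eqSS => /eqP/val_inj.
Qed.

Lemma alt_line_below_unit n (g0 g1 : 'I_n -> int) (k0 : 'I_n) :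
  (forall k, g0 k = (k == k0)%:R) -> (forall k, alt_sign_start (g0 k) (g1 k)) ->
  alt_sign_seq [seq g1 k | k <- enum 'I_n] -> weight g1 = weight g0 -> g1 k0 = -1.
Proof.
move=> g0E start alt_g1 weight_eq; apply/eqP/negPn/negP => /eqP g1k0.
have no_m1 k : g1 k <> -1.
  case: (eqVneq k k0) => [-> // | ne_k].
  by have [_ + _] := start k; apply; rewrite g0E (negPf ne_k).
have [k1 g1E] := alt_line_unit alt_g1 no_m1.
have k10 : k1 = k0 := weight_unit_inj g1E g0E weight_eq.
by have [_ _] := start k0; rewrite g0E g1E k10 eqxx; apply.
Qed.

Lemma adjacent_planes_weight_nonconst n (G H : 'I_n -> 'I_n -> int) :
  (3 < n)%N ->
  (forall j, alt_sign_seq [seq G j k | k <- enum 'I_n]) ->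
  (forall k, alt_sign_seq [seq G j k | j <- enum 'I_n]) ->
  (forall k, alt_sign_seq [seq H j k | j <- enum 'I_n]) ->
  (forall j k, alt_sign_start (H j k) (G j k)) ->
  ~ (forall j j', weight (G j) = weight (G j')).
Proof.
move=> n_gt3 alt_row alt_col alt_colH start const.
have n_gt1 : (1 < n)%N by lia.
have lt_n2 : (n - 2 < n)%N by lia.
pose j1 := Ordinal n_gt1; pose j2 := Ordinal lt_n2.
have [o1 start1] := @alt_line_border_start n j1 n_gt1 (or_introl erefl).
have [o2 start2] := @alt_line_border_start n j2 n_gt1 (or_intror erefl).
have [k0 G1E] : exists k0, forall k, G o1 k = (k == k0)%:R.
  by apply: alt_line_unit => // k; case: (start1 _ (alt_col k)).
have [k0' G2E] : exists k0, forall k, G o2 k = (k == k0)%:R.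
  by apply: alt_line_unit => // k; case: (start2 _ (alt_col k)).
have k00 : k0' = k0 := weight_unit_inj G2E G1E (const o2 o1).
subst k0'.
have G1m1 : G j1 k0 = -1.
  exact: alt_line_below_unit G1E (fun k => start1 _ (alt_col k)) (alt_row j1) (const j1 o1).
have G2m1 : G j2 k0 = -1.
  exact: alt_line_below_unit G2E (fun k => start2 _ (alt_col k)) (alt_row j2) (const j2 o2).
have [jj HE] : exists jj, forall j, H j k0 = (j == jj)%:R.
  by apply: alt_line_unit (alt_colH k0) _ => j; case: (start j k0).
have under_m1 j : G j k0 = -1 -> j = jj.
  move=> Gm1; case: (eqVneq j jj) => // ne_j.
  by have [_ + _] := start j k0; rewrite HE (negPf ne_j) Gm1; move/(_ erefl).
have /(congr1 val) /= := etrans (under_m1 _ G1m1) (esym (under_m1 _ G2m1)).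
lia.
Qed.

Lemma is_ASHM_lines n (A : hypermatrix n) : is_ASHM A ->
  [/\ forall i j, alt_sign_seq [seq A i j k | k <- enum 'I_n],
      forall i k, alt_sign_seq [seq A i j k | j <- enum 'I_n] &
      forall j k, alt_sign_seq [seq A i j k | i <- enum 'I_n]].
Proof.
case/and4P=> _ alt_k alt_j alt_i; split.
- by move=> i j; exact: (forallP (forallP alt_k i) j).
- by move=> i k; exact: (forallP (forallP alt_j i) k).
- by move=> j k; exact: (forallP (forallP alt_i j) k).
Qed.

Theorem mainTheorem7 (n : nat) (A : hypermatrix n) :
  (3 < n)%N -> is_ASHM A ->
  forall r : 'I_n, (val r = 1 \/ val r = n - 2)%N ->
    ~ const_row (Lmat A) r /\ ~ const_col (Lmat A) r.
Proof.
move=> n_gt3 /is_ASHM_lines[alt_k alt_j alt_i] r r_val.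
have [o start_o] := alt_line_border_start (ltnW (ltnW n_gt3)) r_val.
split=> [const | const].
- apply: (@adjacent_planes_weight_nonconst n (A r) (A o)) => //.
  + by move=> j k; apply: (start_o (fun i => A i j k)).
  + by move=> j j'; rewrite -!LmatE.
- apply: (@adjacent_planes_weight_nonconst n (fun i => A i r) (fun i => A i o)) => //.
  + by move=> i k; apply: (start_o (fun j => A i j k)).
  + by move=> i i'; rewrite -!LmatE.
Qed.
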